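(* Let $K=2m+1$ with $m\ge 3$ and suppose $t=KM/N=K-2$. Then the D2D coded caching rate $R=N/M-1$ is achievable with subpacketization $F=K(K-2)$.
   Context: D2D coded caching setting: there are $N\ge 1$ files $W_1,\dots,W_N$ and $K\ge 2$ users, each with a cache of size $M$ files, $0<M\le N$, and $t:=KM/N$ is assumed to be a positive integer. A D2D coded caching scheme with (uncoded placement and) subpacketization $F\in\mathbb{N}_+$ is defined as follows. Fix a packet size $b\ge 1$; each file is a sequence of $F$ packets $W_n=(W_n^{(1)},\dots,W_n^{(F)})$, $W_n^{(j)}\in\{0,1\}^b$. Placement: each user $k\in[K]$ stores the packets $\{W_n^{(j)}:(n,j)\in Z_k\}$ for a fixed index set $Z_k\subseteq[N]\times[F]$ with $|Z_k|\le MF$ (independent of demands and file contents). Delivery: for every demand vector $\mathbf d=(d_1,\dots,d_K)\in[N]^K$, each user $k$ broadcasts to all other users $\ell_k(\mathbf d)\in\mathbb{N}$ blocks in $\{0,1\}^b$, each a deterministic function of the packets stored by user $k$; it is required that for all file contents each user $k$ can recover all $F$ packets of $W_{d_k}$ from its stored packets and the blocks sent by the other users. The rate is $R=\max_{\mathbf d}\frac{1}{F}\sum_{k=1}^K\ell_k(\mathbf d)$ (transmitted bits normalized by the file size $Fb$). The rate $R$ is achievable with subpacketization $F$ if such a scheme with rate $R$ exists for every packet size $b\ge 1$. *)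

From mathcomp Require Import all_boot all_order all_algebra.
Set Implicit Arguments. Unset Strict Implicit. Unset Printing Implicit Defensive.
Import Order.TTheory GRing.Theory Num.Theory.

Definition bits (b : nat) := b.-tuple bool.

Definition files (N F b : nat) := 'I_N -> 'I_F -> bits b.

(* What a user with index set Z sees of the library: packet (n,j) if (n,j) \in Z. *)
Definition cache_view (N F b : nat) := {ffun 'I_N * 'I_F -> option (bits b)}.

Definition stored (N F b : nat) (Z : {set 'I_N * 'I_F}) (W : files N F b)
  : cache_view N F b :=
  [ffun p => if p \in Z then Some (W p.1 p.2) else None].

Definition demand (N K : nat) := {ffun 'I_K -> 'I_N}.

(* A D2D coded caching scheme with uncoded placement, subpacketization F,
   packet size b, cache size M (in files).
   - Z k : placement index set of user k, with |Z k| <= M F;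
   - len d k : number of blocks broadcast by user k under demand d;
   - enc d k : the blocks sent by user k, a function of its stored packets only;
   - dec d k : user k's decoder, a function of its stored packets and the
     blocks sent by the OTHER users (its own slot is blanked);
   - dec_ok : decoding recovers every packet of W_{d_k} for all file contents. *)
Record d2d_scheme (N K F b : nat) (M : rat) := D2DScheme {
  plc : 'I_K -> {set 'I_N * 'I_F};
  plc_size : forall k, (#|plc k|%:R <= M * F%:R :> rat)%R;
  len : demand N K -> 'I_K -> nat;
  enc : forall (d : demand N K) (k : 'I_K),
          cache_view N F b -> (len d k).-tuple (bits b);
  dec : demand N K -> 'I_K -> cache_view N F b ->
          ('I_K -> seq (bits b)) -> 'I_F -> bits b;
  dec_ok : forall (d : demand N K) (k : 'I_K) (W : files N F b) (j : 'I_F),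
    dec d k (stored (plc k) W)
        (fun i => if i == k then [::] else val (enc d i (stored (plc i) W))) j
    = W (d k) j
}.

Definition rate (N K F b : nat) (M : rat) (S : d2d_scheme N K F b M) : rat :=
  ((\max_(d : demand N K) \sum_(k < K) len S d k)%:R / F%:R)%R.

Definition achievable (N K : nat) (M : rat) (F : nat) (R : rat) : Prop :=
  forall b : nat, (1 <= b)%N -> exists S : d2d_scheme N K F b M, rate S = R.

From HB Require Import structures.
From mathcomp Require Import all_boot all_order all_algebra.
From mathcomp Require Import zify ring.
Set Implicit Arguments. Unset Strict Implicit. Unset Printing Implicit Defensive.
Import Order.TTheory GRing.Theory Num.Theory.

(* Index the users by Z/K and the packets by pairs (z, i), where z is in Z/K
   and s_i = i + 2 runs over the residues other than 0 and 1.  Packet (z, i) of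
   every file is cached by everybody except users z and z + s_i, so each user
   caches (K - 2)^2 of the K (K - 2) packets of each file: M = N (K - 2) / K.
   User k broadcasts two XORs: of the packets (k - 1, i) wanted by the users
   k - 1 + s_i, and of the packets (k + 1 - s_i, i) wanted by the users
   k + 1 - s_i.  Since s_i is never 1 the sender caches every term, and since
   the s_i are distinct and nonzero each receiver caches every term but its
   own.  K users sending 2 packets each give rate 2K / (K (K - 2)) = N / M - 1. *)

Section BitXor.
Variable b : nat.

Definition bits0 : bits b := [tuple false | _ < b].
Definition bxor (x y : bits b) : bits b := [tuple tnth x i (+) tnth y i | i < b].

Lemma bxorA : associative bxor.
Proof. by move=> x y z; apply: eq_from_tnth => i; rewrite !tnth_mktuple addbA. Qed.
Lemma bxorC : commutative bxor.
Proof. by move=> x y; apply: eq_from_tnth => i; rewrite !tnth_mktuple addbC. Qed.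
Lemma bxor0b : left_id bits0 bxor.
Proof. by move=> x; apply: eq_from_tnth => i; rewrite !tnth_mktuple. Qed.
Lemma bxorK (y : bits b) : cancel (bxor^~ y) (bxor^~ y).
Proof. by move=> x; apply: eq_from_tnth => i; rewrite !tnth_mktuple addbK. Qed.

HB.instance Definition _ := Monoid.isComLaw.Build (bits b) bits0 bxor bxorA bxorC bxor0b.

Lemma bxor_bigD1K (I : finType) (i : I) (f g : I -> bits b) :
    (forall j, j != i -> f j = g j) ->
  bxor (\big[bxor/bits0]_j f j) (\big[bxor/bits0]_(j | j != i) g j) = f i.
Proof.
by move=> fg; rewrite (bigD1 i) //= [X in bxor _ X](eq_bigr f) ?bxorK // => j /fg ->.
Qed.

End BitXor.

Section ZmodEq.
Variable V : zmodType.
Local Open Scope ring_scope.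

Lemma eqrD2l (x y z : V) : (x + y == x + z) = (y == z).
Proof. exact/inj_eq/addrI. Qed.

Lemma eqrDl (x y : V) : (x + y == x) = (y == 0).
Proof. by rewrite -[X in _ == X]addr0 eqrD2l. Qed.

End ZmodEq.

Section CyclicScheme.
Variables N n b : nat.
Local Notation K := n.+3.
Local Notation F := (n.+3 * n.+1)%N.
Local Notation user := 'I_K.
Local Notation view := (cache_view N F b).
Local Open Scope ring_scope.

Definition offset (i : 'I_n.+1) : user := @Ordinal K i.+2 (ltn_ord i).

Lemma offset_eq i j : (offset i == offset j) = (i == j).
Proof. by apply/inj_eq => {}i {}j /(congr1 val) /= [] /val_inj. Qed.
Lemma offset_eq0 i : (offset i == 0) = false.
Proof. by []. Qed.
Lemma offset_eq1 i : (offset i == 1) = false.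
Proof. by apply/eqP => /(congr1 val) /=; rewrite modn_small. Qed.

Lemma card_packet : #|{: user * 'I_n.+1}| = F.
Proof. by rewrite card_prod !card_ord. Qed.

Definition pack (p : user * 'I_n.+1) : 'I_F := cast_ord card_packet (enum_rank p).
Definition unpack (j : 'I_F) : user * 'I_n.+1 :=
  enum_val (cast_ord (esym card_packet) j).

Lemma packK : cancel pack unpack.
Proof. by move=> p; rewrite /unpack /pack cast_ordK enum_rankK. Qed.
Lemma unpackK : cancel unpack pack.
Proof. by move=> j; rewrite /unpack /pack enum_valK cast_ordKV. Qed.

Definition misses (u : user) (p : user * 'I_n.+1) := (u == p.1) || (u == p.1 + offset p.2).

Lemma fwd_sender_stores z i : ~~ misses (z + 1) (z, i).
Proof. by rewrite /misses /= eqrDl eqrD2l oner_eq0 eq_sym offset_eq1. Qed.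

Lemma fwd_receiver_stores z i i' : i' != i -> ~~ misses (z + offset i) (z, i').
Proof. by rewrite /misses /= eqrDl eqrD2l offset_eq0 offset_eq eq_sym => /negbTE ->. Qed.

Lemma bwd_sender_stores w i : ~~ misses (w - 1) (w - offset i, i).
Proof.
by rewrite /misses /= subrK eqrD2l eqrDl (inj_eq oppr_inj) oppr_eq0 eq_sym offset_eq1 oner_eq0.
Qed.

Lemma bwd_receiver_stores z i i' :
  i' != i -> ~~ misses z (z + offset i - offset i', i').
Proof.
rewrite /misses /= subrK -addrA ![z == _]eq_sym eqrDl eqrDl subr_eq0 offset_eq offset_eq0.
by rewrite orbF eq_sym.
Qed.

Lemma card_cached u : #|[set p | ~~ misses u p]| = (n.+1 * n.+1)%N.
Proof.
set A := [set (u, i) | i : 'I_n.+1]; set B := [set (u - offset i, i) | i : 'I_n.+1].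
have cardA : #|A| = n.+1 by rewrite card_imset ?card_ord // => i j [].
have cardB : #|B| = n.+1 by rewrite card_imset ?card_ord // => i j [].
have AB0 : A :&: B = set0.
  apply/setP => p; rewrite !inE; apply/negP => /andP [/imsetP [i _ ->]].
  case/imsetP => i' _ [e _]; move: e; apply/eqP.
  by rewrite eq_sym eqrDl oppr_eq0 offset_eq0.
have missesE : ~: [set p | ~~ misses u p] = A :|: B.
  apply/setP => -[z i]; rewrite !inE negbK /misses /=.
  apply/orP/orP => [[] /eqP hu|[] /imsetP [i' _ [-> ->]]].
  - by left; apply/imsetP; exists i; rewrite ?hu.
  - by right; apply/imsetP; exists i; rewrite ?hu ?addrK.
  - by left.
  - by right; rewrite subrK.
have := cardsC [set p | ~~ misses u p]; rewrite missesE cardsU AB0 cards0 cardA cardB.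
by rewrite card_packet; lia.
Qed.

Definition placement u : {set 'I_N * 'I_F} :=
  setX [set: 'I_N] (pack @: [set p | ~~ misses u p]).

Lemma card_placement u : #|placement u| = (N * (n.+1 * n.+1))%N.
Proof.
by rewrite cardsX cardsT card_ord card_imset ?card_cached //; apply: can_inj packK.
Qed.

Definition lookup (v : view) q := odflt (bits0 b) (v q).

Lemma lookup_placement u W x p :
  ~~ misses u p -> lookup (stored (placement u) W) (x, pack p) = W x (pack p).
Proof.
move=> st; rewrite /lookup /stored ffunE in_setX in_setT /=.
by rewrite mem_imset ?inE ?st //; apply: can_inj packK.
Qed.

Definition fwd_term (d : demand N K) (v : view) z i :=
  lookup v (d (z + offset i), pack (z, i)).
Definition bwd_term (d : demand N K) (v : view) w i :=
  lookup v (d (w - offset i), pack (w - offset i, i)).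

Definition transmit (d : demand N K) (k : user) (v : view) : 2.-tuple (bits b) :=
  [tuple \big[@bxor b/bits0 b]_i fwd_term d v (k - 1) i;
         \big[@bxor b/bits0 b]_i bwd_term d v (k + 1) i].

Definition decode (d : demand N K) (u : user) (v : view)
    (received : user -> seq (bits b)) (j : 'I_F) :=
  let: (z, i) := unpack j in
  if u == z + offset i then
    bxor (nth (bits0 b) (received (z + 1)) 0)
         (\big[@bxor b/bits0 b]_(i' | i' != i) fwd_term d v z i')
  else if u == z then
    bxor (nth (bits0 b) (received (z + offset i - 1)) 1)
         (\big[@bxor b/bits0 b]_(i' | i' != i) bwd_term d v (z + offset i) i')
  else lookup v (d u, j).

Lemma decode_transmitted (d : demand N K) (u : user) (W : files N F b) (j : 'I_F) :
  decode d u (stored (placement u) W)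
    (fun k => if k == u then [::] else val (transmit d k (stored (placement k) W))) j
  = W (d u) j.
Proof.
rewrite -(unpackK j); case: (unpack j) => z i; rewrite /decode packK.
case: eqP => [-> | /eqP u_fwd].
  have sender_ne : z + 1 != z + offset i by rewrite eqrD2l eq_sym offset_eq1.
  rewrite (negbTE sender_ne) /= addrK bxor_bigD1K /fwd_term.
    by rewrite lookup_placement ?fwd_sender_stores.
  by move=> i' ne; rewrite !lookup_placement ?fwd_sender_stores ?fwd_receiver_stores.
case: eqP => [-> | /eqP u_bwd]; last first.
  by rewrite lookup_placement // negb_or u_bwd.
have sender_ne : z + offset i - 1 != z by rewrite -addrA eqrDl subr_eq0 offset_eq1.
rewrite (negbTE sender_ne) /= subrK bxor_bigD1K /bwd_term.
  by rewrite lookup_placement ?bwd_sender_stores // addrK.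
move=> i' ne; rewrite !lookup_placement ?bwd_sender_stores //.
exact: bwd_receiver_stores.
Qed.

Definition cyclic_scheme (M : rat) (cache_ok : forall u, #|placement u|%:R <= M * F%:R) :=
  @D2DScheme N K F b M placement cache_ok (fun _ _ => 2%N) transmit decode decode_transmitted.

Lemma rate_cyclic_scheme M cache_ok : (0 < N)%N ->
  rate (@cyclic_scheme M cache_ok) = (K * 2)%:R / F%:R.
Proof.
move=> N_gt0; rewrite /rate /=; congr (_%:R / _).
have d0 : demand N K := [ffun _ => Ordinal N_gt0].
apply/eqP; rewrite eqn_leq; apply/andP; split.
  by apply/bigmax_leqP => d _; rewrite sum_nat_const card_ord.
by apply: leq_trans (leq_bigmax d0); rewrite sum_nat_const card_ord.
Qed.

End CyclicScheme.

Lemma cyclic_scheme_achievable N n (M : rat) : (0 < N)%N ->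
  (n.+3%:R * M / N%:R = n.+1%:R)%R ->
  achievable N n.+3 M (n.+3 * n.+1) (N%:R / M - 1)%R.
Proof.
move=> N_gt0 hK b _.
have N_neq0 : (N%:R != 0 :> rat)%R by rewrite pnatr_eq0 -lt0n.
have ME : M = (n.+1%:R * N%:R / n.+3%:R)%R.
  by rewrite -hK; field; rewrite N_neq0 -natrD pnatr_eq0.
have cache_ok (u : 'I_n.+3) : (#|placement N u|%:R <= M * (n.+3 * n.+1)%N%:R :> rat)%R.
  suff -> : (M * (n.+3 * n.+1)%N%:R = (N * (n.+1 * n.+1))%N%:R :> rat)%R.
    by rewrite card_placement.
  by rewrite ME !natrM; field; rewrite -natrD pnatr_eq0.
exists (cyclic_scheme b cache_ok); rewrite rate_cyclic_scheme // ME !natrM.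
by field; rewrite N_neq0 -natrD pnatr_eq0 addrC natr1 pnatr_eq0.
Qed.

Theorem mainTheorem6 (m N K : nat) (M : rat) :
  (3 <= m)%N -> (1 <= N)%N -> K = (2 * m + 1)%N ->
  (0 < M)%R -> (M <= N%:R)%R ->
  (K%:R * M / N%:R = (K - 2)%:R :> rat)%R ->
  achievable N K M (K * (K - 2)) (N%:R / M - 1)%R.
Proof.
(* The construction only needs K >= 3, not m >= 3 or the oddness of K. *)
move=> m_ge3 N_gt0 -> _ _.
have -> : (2 * m + 1 = (2 * m - 2).+3)%N by lia.
have -> : ((2 * m - 2).+3 - 2 = (2 * m - 2).+1)%N by lia.
exact: cyclic_scheme_achievable.
Qed.
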